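(* For all $k,n\in\mathbb{N}_0$, $$\rho_k(n)+k\,\rho_k(\infty)<(k+1)\,\rho_k(n+1).$$
   Context: For $k\in\mathbb{N}_0$ put $t=k+2$ and define $u_0=0$, $u_1=1$, $u_{i+2}=tu_{i+1}-u_i$; $\rho_k(0)=0$ and $\rho_k(n)=1+\frac{u_{n-1}}{u_n+1}$ for $n\in\mathbb{N}$; $\rho_k(\infty)=\lim_{n\to\infty}\rho_k(n)$ (equal to $2$ for $k=0$). *)

From Stdlib Require Import Reals.
From Coquelicot Require Import Coquelicot.
Open Scope R_scope.

Fixpoint upair (k : nat) (i : nat) : R * R :=
  match i with
  | O => (0, 1)
  | S j => let (a, b) := upair k j in (b, (INR k + 2) * b - a)
  end.

Definition u (k i : nat) : R := fst (upair k i).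

Definition rho (k n : nat) : R :=
  match n with
  | O => 0
  | S m => 1 + u k m / (u k (S m) + 1)
  end.

Definition rho_inf (k : nat) : R := real (Lim_seq (fun n => rho k n)).

(* With [t = k + 2], let [m] be the smaller root of [m^2 - t m + 1 = 0], so
   [0 < m <= 1] and [k m = (1 - m)^2].  The sequence satisfies
   [m u_(n+1) - u_n = m^(n+1)], which gives [rho_k(n) <= 1 + m] and hence
   [rho_k(oo) <= 1 + m].  Writing [p = m^(j+1)] and [y = u_(j+1)], both
   [rho_k(j+1)] and [rho_k(j+2)] become rational functions of [m], [p], [y],
   tied by [p y (1 - m^2) = m (1 - p^2)]; after clearing denominators the
   [y^2] terms cancel and the remaining linear inequality in [y] follows from
   that relation and [0 < p <= m]. *)
From Stdlib Require Import Reals Lra Psatz.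
From Coquelicot Require Import Coquelicot.
Open Scope R_scope.

Lemma u_0 k : u k 0 = 0.
Proof. reflexivity. Qed.

Lemma u_1 k : u k 1 = 1.
Proof. reflexivity. Qed.

Lemma u_SS k n : u k (S (S n)) = (INR k + 2) * u k (S n) - u k n.
Proof. unfold u; simpl; now destruct (upair k n). Qed.

Definition mu (k : nat) : R :=
  let t := INR k + 2 in (t - sqrt (t * t - 4)) / 2.

Lemma mu_root k : mu k * mu k - (INR k + 2) * mu k + 1 = 0.
Proof.
  assert (Hk := pos_INR k).
  assert (Hs : sqrt ((INR k + 2) * (INR k + 2) - 4) ^ 2
               = (INR k + 2) * (INR k + 2) - 4) by (apply pow2_sqrt; nra).
  unfold mu; simpl; nra.
Qed.

Lemma mu_bounds k : 0 < mu k <= 1.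
Proof.
  assert (Hk := pos_INR k).
  set (t := INR k + 2).
  assert (Hs : sqrt (t * t - 4) ^ 2 = t * t - 4) by (apply pow2_sqrt; unfold t; nra).
  assert (Hs0 := sqrt_pos (t * t - 4)).
  unfold mu; fold t.
  assert (sqrt (t * t - 4) < t) by (unfold t in *; nra).
  assert (t - 2 <= sqrt (t * t - 4)) by (unfold t in *; nra).
  lra.
Qed.

Lemma mu_mul_u_sub k n : mu k * u k (S n) - u k n = mu k ^ S n.
Proof.
  assert (Hroot := mu_root k).
  induction n as [|n IH].
  - rewrite u_0, u_1; simpl; ring.
  - rewrite u_SS; change (mu k ^ S (S n)) with (mu k * mu k ^ S n); rewrite <- IH.
    replace (mu k * ((INR k + 2) * u k (S n) - u k n) - u k (S n))
      with (mu k * (mu k * u k (S n) - u k n)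
            - (mu k * mu k - (INR k + 2) * mu k + 1) * u k (S n)) by ring.
    rewrite Hroot; ring.
Qed.

Lemma u_nonneg k n : 0 <= u k n.
Proof.
  destruct (mu_bounds k) as [Hm _].
  induction n as [|n IH]; [rewrite u_0; lra|].
  assert (Hp := pow_lt _ (S n) Hm).
  assert (Hd := mu_mul_u_sub k n).
  nra.
Qed.

(* The closed form [u_n = (m^-n - m^n) / (m^-1 - m)], cleared of denominators. *)
Lemma u_closed_form k n :
  mu k ^ n * u k n * (1 - mu k ^ 2) = mu k * (1 - (mu k ^ n) ^ 2).
Proof.
  induction n as [|n IH]; [rewrite u_0; simpl; ring|].
  assert (Hd := mu_mul_u_sub k n).
  replace (mu k ^ S n * u k (S n)) with (mu k ^ n * (mu k * u k (S n))) by (simpl; ring).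
  replace (mu k * u k (S n)) with (u k n + mu k ^ S n) by lra.
  replace (mu k ^ n * (u k n + mu k ^ S n) * (1 - mu k ^ 2))
    with (mu k ^ n * u k n * (1 - mu k ^ 2) + mu k ^ n * mu k ^ S n * (1 - mu k ^ 2))
    by ring.
  rewrite IH; simpl; ring.
Qed.

Lemma rho_le k n : rho k n <= 1 + mu k.
Proof.
  assert (Hm := mu_bounds k).
  destruct n as [|j]; simpl; [lra|].
  assert (Hy := u_nonneg k (S j)).
  assert (Hd := mu_mul_u_sub k j).
  assert (Hp := pow_lt _ (S j) (proj1 Hm)).
  enough (u k j / (u k (S j) + 1) <= mu k) by lra.
  apply Rmult_le_reg_r with (u k (S j) + 1); [lra|].
  field_simplify; lra.
Qed.

Lemma rho_inf_le k : rho_inf k <= 1 + mu k.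
Proof.
  unfold rho_inf.
  assert (H : Rbar_le (Lim_seq (rho k)) (Lim_seq (fun _ => 1 + mu k))).
  { apply Lim_seq_le_loc; exists O; intros n _; apply rho_le. }
  rewrite Lim_seq_const in H.
  destruct (Lim_seq (rho k)); simpl in *; try contradiction;
    pose proof (mu_bounds k); lra.
Qed.

Lemma rho_S_eq k j :
  rho k (S j) = 1 + (mu k * u k (S j) - mu k ^ S j) / (u k (S j) + 1).
Proof. simpl rho; rewrite <- (mu_mul_u_sub k j); do 3 f_equal; ring. Qed.

Lemma rho_SS_eq k j :
  rho k (S (S j)) = 1 + mu k * u k (S j) / (u k (S j) + mu k * (mu k ^ S j + 1)).
Proof.
  assert (Hroot := mu_root k); assert (Hm := mu_bounds k).
  assert (Hd := mu_mul_u_sub k j).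
  assert (Hy := u_nonneg k (S j)); assert (Hp := pow_lt _ (S j) (proj1 Hm)).
  simpl rho; rewrite u_SS.
  assert (Hden : mu k * ((INR k + 2) * u k (S j) - u k j + 1)
                 = u k (S j) + mu k * (mu k ^ S j + 1)) by nra.
  rewrite <- Hden; field; split; nra.
Qed.

Lemma rho_gap_numerator_pos (m p y : R) :
  0 < m <= 1 -> 0 < p <= m -> p * y * (1 - m ^ 2) = m * (1 - p ^ 2) ->
  0 < (1 - m) * (p + m ^ 2 * (p + 1)) * y + m * (p + 1) * (p - (1 - m) ^ 2).
Proof.
  intros Hm Hp Hrel.
  set (Q := (1 - p) * (p + m ^ 2 * (p + 1)) + p * (1 + m) * (p - (1 - m) ^ 2)).
  assert (HQ : 0 < Q).
  { assert (0 < (m - p) * (1 + m ^ 2) + 2 * m ^ 2 * (1 - m) + p * (1 + m)) by nra.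
    replace Q with (p * ((m - p) * (1 + m ^ 2) + 2 * m ^ 2 * (1 - m) + p * (1 + m))
                    + (1 - p) * m ^ 2) by (unfold Q; ring).
    nra. }
  (* Eliminate [y] with the relation: the numerator times [p (1 + m)] is [m (1 + p) Q]. *)
  apply Rmult_lt_reg_l with (p * (1 + m)); [nra|].
  replace (p * (1 + m) * ((1 - m) * (p + m ^ 2 * (p + 1)) * y
                          + m * (p + 1) * (p - (1 - m) ^ 2)))
    with (m * (1 + p) * Q + (p + m ^ 2 * (p + 1)) * (p * y * (1 - m ^ 2) - m * (1 - p ^ 2)))
    by (unfold Q; ring).
  rewrite Hrel, Rminus_eq_0, !Rmult_0_r, Rplus_0_r.
  apply Rmult_lt_0_compat; [nra | exact HQ].
Qed.

Lemma rho_gap_pos (m p y : R) :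
  0 < m <= 1 -> 0 < p <= m -> 0 <= y -> p * y * (1 - m ^ 2) = m * (1 - p ^ 2) ->
  (m * y - p) / (y + 1) + (1 - m) ^ 2 < (1 - m + m ^ 2) * (y / (y + m * (p + 1))).
Proof.
  intros Hm Hp Hy Hrel.
  assert (Hy1 : 0 < y + 1) by lra.
  assert (Hy2 : 0 < y + m * (p + 1)) by nra.
  (* The [y^2] terms cancel, leaving the numerator above. *)
  assert (E : (1 - m + m ^ 2) * (y / (y + m * (p + 1)))
              - ((m * y - p) / (y + 1) + (1 - m) ^ 2)
              = ((1 - m) * (p + m ^ 2 * (p + 1)) * y + m * (p + 1) * (p - (1 - m) ^ 2))
                / ((y + 1) * (y + m * (p + 1)))) by (field; split; lra).
  assert (0 < ((1 - m) * (p + m ^ 2 * (p + 1)) * y + m * (p + 1) * (p - (1 - m) ^ 2))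
              / ((y + 1) * (y + m * (p + 1)))).
  { apply Rdiv_lt_0_compat;
      [apply rho_gap_numerator_pos | apply Rmult_lt_0_compat]; assumption. }
  lra.
Qed.

Theorem lemma3 (k n : nat) :
  rho k n + INR k * rho_inf k < (INR k + 1) * rho k (S n).
Proof.
  assert (Hk := pos_INR k).
  assert (Hm := mu_bounds k); assert (Hroot := mu_root k).
  assert (Hkm : INR k * mu k = (1 - mu k) ^ 2) by nra.
  assert (Hinf : INR k * rho_inf k <= INR k * (1 + mu k))
    by (apply Rmult_le_compat_l; [lra | apply rho_inf_le]).
  destruct n as [|j].
  - simpl rho; rewrite u_0, u_1; nra.
  - rewrite rho_S_eq, rho_SS_eq.
    assert (Hrel := u_closed_form k (S j)); assert (Hy := u_nonneg k (S j)).
    set (m := mu k) in *; set (p := m ^ S j) in *; set (y := u k (S j)) in *.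
    assert (Hp : 0 < p <= m).
    { split; [apply pow_lt; lra|].
      assert (Hpow : m ^ j <= 1 ^ j) by (apply pow_incr; lra).
      rewrite pow1 in Hpow; assert (0 <= m ^ j) by (apply pow_le; lra).
      change p with (m * m ^ j); nra. }
    assert (Hgap := rho_gap_pos m p y Hm Hp Hy Hrel).
    replace ((INR k + 1) * (1 + m * y / (y + m * (p + 1))))
      with (INR k + 1 + (INR k * m + m) * (y / (y + m * (p + 1)))) by (unfold Rdiv; ring).
    rewrite Hkm; nra.
Qed.
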